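(* Let $G$ be a group (as an algebra with multiplication, inverse and identity) and $K,H\trianglelefteq G$ normal subgroups with $K\le H$. Then: (1) there is a homomorphism $\phi:G/H\to\operatorname{Aut}(K/[K,H])$ such that $G(\alpha_K)/\Delta_{\alpha_K\alpha_H}\cong K/[K,H]\rtimes_\phi G/H$; (2) $G(\alpha_K)/\Delta_{\alpha_K 1}\cong K/[K,G]$. Here $[K,H]$ is the usual group commutator subgroup.
   Context: For a normal subgroup $N\trianglelefteq G$, $\alpha_N=\{(x,y)\in G^2:xy^{-1}\in N\}$ is the corresponding congruence; $1$ denotes the total congruence of $G$. For a congruence $\alpha$ of an algebra $A$, $A(\alpha)=\{(x,y)\in A\times A:(x,y)\in\alpha\}$ is $\alpha$ viewed as a subalgebra of $A\times A$, and for a congruence $\beta$, $\Delta_{\alpha\beta}$ is the congruence of $A(\alpha)$ generated by $\{((u,u),(v,v)):(u,v)\in\beta\}$. For a homomorphism $\phi:Q\to\operatorname{Aut}(N)$, $N\rtimes_\phi Q$ is the semidirect product on $N\times Q$ with $(a,x)(b,y)=(a\,\phi(x)(b),xy)$. *)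

(* Quotient/sub-structures are
   represented as "subquotient algebras": a carrier, a domain predicate (which
   elements belong), an equivalence (when two representatives denote the same
   element) and total operations on the carrier. *)
Set Implicit Arguments.

Section GroupDefs.
Variables (T : Type) (mul : T -> T -> T) (inv : T -> T) (one : T).

Definition is_group : Prop :=
  (forall x y z, mul x (mul y z) = mul (mul x y) z) /\
  (forall x, mul one x = x) /\ (forall x, mul x one = x) /\
  (forall x, mul (inv x) x = one) /\ (forall x, mul x (inv x) = one).

Definition is_subgroup (S : T -> Prop) : Prop :=
  S one /\ (forall x y, S x -> S y -> S (mul x y)) /\ (forall x, S x -> S (inv x)).

Definition is_normal (N : T -> Prop) : Prop :=
  is_subgroup N /\ (forall g x, N x -> N (mul (mul (inv g) x) g)).

Definition commutator (x y : T) : T := mul (mul (mul (inv x) (inv y)) x) y.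

Definition comm_subgroup (K H : T -> Prop) (x : T) : Prop :=
  forall S, is_subgroup S ->
    (forall k h, K k -> H h -> S (commutator k h)) -> S x.

Definition alpha (N : T -> Prop) (x y : T) : Prop := N (mul x (inv y)).

Definition total_rel (x y : T) : Prop := True.

(* congruences of the algebra G(alpha) (subalgebra of G x G, with domain
   given by alpha) *)
Definition pmul (p q : T * T) : T * T := (mul (fst p) (fst q), mul (snd p) (snd q)).
Definition pinv (p : T * T) : T * T := (inv (fst p), inv (snd p)).
Definition pone : T * T := (one, one).

Definition is_congruence_Galpha (al : T -> T -> Prop)
    (R : T * T -> T * T -> Prop) : Prop :=
  (forall p q, R p q -> al (fst p) (snd p) /\ al (fst q) (snd q)) /\
  (forall p, al (fst p) (snd p) -> R p p) /\
  (forall p q, R p q -> R q p) /\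
  (forall p q r, R p q -> R q r -> R p r) /\
  (forall p p' q q', R p p' -> R q q' -> R (pmul p q) (pmul p' q')) /\
  (forall p p', R p p' -> R (pinv p) (pinv p')).

Definition Delta (al be : T -> T -> Prop) (p q : T * T) : Prop :=
  forall R, is_congruence_Galpha al R ->
    (forall u v, be u v -> R (u, u) (v, v)) -> R p q.

End GroupDefs.

Record salg := SAlg {
  sa_car : Type;
  sa_dom : sa_car -> Prop;
  sa_eq : sa_car -> sa_car -> Prop;
  sa_mul : sa_car -> sa_car -> sa_car;
  sa_inv : sa_car -> sa_car;
  sa_one : sa_car }.

Definition is_hom (A B : salg) (f : sa_car A -> sa_car B) : Prop :=
  (forall x, sa_dom A x -> sa_dom B (f x)) /\
  (forall x y, sa_dom A x -> sa_dom A y -> sa_eq A x y -> sa_eq B (f x) (f y)) /\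
  (forall x y, sa_dom A x -> sa_dom A y ->
     sa_eq B (f (sa_mul A x y)) (sa_mul B (f x) (f y))) /\
  (forall x, sa_dom A x -> sa_eq B (f (sa_inv A x)) (sa_inv B (f x))) /\
  sa_eq B (f (sa_one A)) (sa_one B).

Definition is_iso (A B : salg) (f : sa_car A -> sa_car B) : Prop :=
  is_hom A B f /\
  (forall x y, sa_dom A x -> sa_dom A y -> sa_eq B (f x) (f y) -> sa_eq A x y) /\
  (forall b, sa_dom B b -> exists a, sa_dom A a /\ sa_eq B (f a) b).

Definition isomorphic (A B : salg) : Prop := exists f, is_iso A B f.

Definition qgroup (T : Type) (mul : T -> T -> T) (inv : T -> T) (one : T)
    (D N : T -> Prop) : salg :=
  SAlg D (fun x y => D x /\ D y /\ N (mul x (inv y))) mul inv one.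

Definition Galpha_quot (T : Type) (mul : T -> T -> T) (inv : T -> T) (one : T)
    (al : T -> T -> Prop) (theta : T * T -> T * T -> Prop) : salg :=
  SAlg (fun p : T * T => al (fst p) (snd p)) theta
       (pmul mul) (pinv inv) (pone one).

Definition is_aut_action (Q N : salg) (phi : sa_car Q -> sa_car N -> sa_car N)
  : Prop :=
  (forall x, sa_dom Q x -> is_iso N N (phi x)) /\
  (forall x y, sa_dom Q x -> sa_dom Q y -> sa_eq Q x y ->
     forall a, sa_dom N a -> sa_eq N (phi x a) (phi y a)) /\
  (forall x y a, sa_dom Q x -> sa_dom Q y -> sa_dom N a ->
     sa_eq N (phi (sa_mul Q x y) a) (phi x (phi y a))) /\
  (forall a, sa_dom N a -> sa_eq N (phi (sa_one Q) a) a).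

Definition sdprod (N Q : salg) (phi : sa_car Q -> sa_car N -> sa_car N) : salg :=
  SAlg (fun p : sa_car N * sa_car Q => sa_dom N (fst p) /\ sa_dom Q (snd p))
       (fun p q => sa_eq N (fst p) (fst q) /\ sa_eq Q (snd p) (snd q))
       (fun p q => (sa_mul N (fst p) (phi (snd p) (fst q)), sa_mul Q (snd p) (snd q)))
       (fun p => (phi (sa_inv Q (snd p)) (sa_inv N (fst p)), sa_inv Q (snd p)))
       (sa_one N, sa_one Q).


(* Then
     G(alpha_K)/Delta_{alpha_K alpha_H}  ~  K/[K,H] ><|_phi G/H
   with phi induced by conjugation, and
     G(alpha_K)/Delta_{alpha_K 1}  ~  K/[K,G].

   Give a pair p = (x,y) of G(alpha_K) the coordinates
   (d p, y) with d p = x y^-1 in K.  In these coordinates the product of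
   G x G reads d (p q) = d p . (y_p (d q) y_p^-1), i.e. G(alpha_K) is the
   semidirect product K ><| G for conjugation (diff_pmul, diff_pinv).  The
   heart of the proof is the description of Delta_{alpha_K alpha_H} as the
   relation delta_rel:  p ~ q  iff  d p = d q mod [K,H] and y_p = y_q mod H
   (Delta_iff).  This relation is a congruence containing the generators of
   Delta, because conjugation by elements congruent mod H agrees on K modulo
   [K,H]; conversely every such congruence identifies (c,1) with (1,1) for
   c in [K,H], hence contains delta_rel.  Part (1) follows with the
   isomorphism p |-> (d p, y_p); part (2) is the case H = G, where
   conjugation is trivial on K/[K,G] and p |-> d p is an isomorphism. *)

Section Groups.
Variables (T : Type) (mul : T -> T -> T) (inv : T -> T) (one : T).
Hypothesis HG : is_group mul inv one.

Lemma mulA x y z : mul x (mul y z) = mul (mul x y) z. Proof. apply HG. Qed.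
Lemma mul1g x : mul one x = x. Proof. apply HG. Qed.
Lemma mulg1 x : mul x one = x. Proof. apply HG. Qed.
Lemma mulVg x : mul (inv x) x = one. Proof. apply HG. Qed.
Lemma mulgV x : mul x (inv x) = one. Proof. apply HG. Qed.

Lemma inv_unique x y : mul x y = one -> y = inv x.
Proof. intro E. rewrite <- (mul1g y), <- (mulVg x), <- mulA, E, mulg1. reflexivity. Qed.

Lemma invgK x : inv (inv x) = x.
Proof. symmetry. apply inv_unique, mulVg. Qed.

Lemma invMg x y : inv (mul x y) = mul (inv y) (inv x).
Proof.
  symmetry. apply inv_unique.
  rewrite mulA, <- (mulA x y), mulgV, mulg1, mulgV. reflexivity.
Qed.

Lemma invg1 : inv one = one.
Proof. symmetry. apply inv_unique, mul1g. Qed.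

Lemma mulgVK x y : mul (mul x (inv y)) y = x.
Proof. rewrite <- mulA, mulVg, mulg1. reflexivity. Qed.

Lemma mulgKV x y : mul (mul x y) (inv y) = x.
Proof. rewrite <- mulA, mulgV, mulg1. reflexivity. Qed.

Definition conjg (g x : T) : T := mul (mul g x) (inv g).
Definition diff (p : T * T) : T := mul (fst p) (inv (snd p)).

Ltac group_eq :=
  cbn [sa_mul sa_inv sa_one qgroup Galpha_quot sdprod];
  unfold conjg, diff, commutator, pmul, pinv, pone; cbn [fst snd];
  repeat first [ rewrite mulA | rewrite invMg | rewrite invgK | rewrite invg1
               | rewrite mul1g | rewrite mulg1 | rewrite mulgVK | rewrite mulgKV
               | rewrite mulVg | rewrite mulgV ];
  reflexivity.

Lemma transport {A : Type} {P : A -> Prop} a b : P a -> a = b -> P b.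
Proof. intros h <-. exact h. Qed.

Lemma transport2 {A : Type} {P : A -> A -> Prop} a b a' b' :
  P a b -> a = a' -> b = b' -> P a' b'.
Proof. intros h <- <-. exact h. Qed.

Ltac from h := apply (transport _ _ h); group_eq.
Ltac from2 h := apply (transport2 _ _ _ _ h); group_eq.

Section NormalSubgroup.
Variable N : T -> Prop.
Hypothesis HN : is_normal mul inv one N.

Lemma normal1 : N one. Proof. apply HN. Qed.
Lemma normalM x y : N x -> N y -> N (mul x y). Proof. apply HN. Qed.
Lemma normalV x : N x -> N (inv x). Proof. apply HN. Qed.

Lemma normal_conj g x : N x -> N (conjg g x).
Proof. intro hx. from (proj2 HN (inv g) x hx). Qed.

Lemma alpha_refl x : alpha mul inv N x x.
Proof. unfold alpha. rewrite mulgV. exact normal1. Qed.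

Lemma alpha_sym x y : alpha mul inv N x y -> alpha mul inv N y x.
Proof. unfold alpha. intro h. from (normalV _ h). Qed.

Lemma alpha_trans x y z :
  alpha mul inv N x y -> alpha mul inv N y z -> alpha mul inv N x z.
Proof. unfold alpha. intros h1 h2. from (normalM _ _ h1 h2). Qed.

Lemma alpha_mul x x' y y' : alpha mul inv N x x' -> alpha mul inv N y y' ->
  alpha mul inv N (mul x y) (mul x' y').
Proof. unfold alpha. intros h1 h2. from (normalM _ _ (normal_conj x _ h2) h1). Qed.

Lemma alpha_inv x y : alpha mul inv N x y -> alpha mul inv N (inv x) (inv y).
Proof. unfold alpha. intro h. from (normal_conj (inv x) _ (normalV _ h)). Qed.

Lemma alpha_conj g x y :
  alpha mul inv N x y -> alpha mul inv N (conjg g x) (conjg g y).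
Proof. unfold alpha. intro h. from (normal_conj g _ h). Qed.

End NormalSubgroup.

Lemma qgroup_eq_of_eq (D N : T -> Prop) x y : is_subgroup mul inv one N ->
  D x -> x = y -> sa_eq (qgroup mul inv one D N) x y.
Proof.
  intros hN hx <-. split; [exact hx | split; [exact hx |]].
  cbn. rewrite mulgV. apply hN.
Qed.

Section CommutatorSubgroup.
Variables K H : T -> Prop.
Local Notation C := (comm_subgroup mul inv one K H).

Lemma comm_subgroup_subgroup : is_subgroup mul inv one C.
Proof.
  split; [| split].
  - intros S hS _. apply hS.
  - intros x y hx hy S hS hc. apply hS; [apply hx | apply hy]; assumption.
  - intros x hx S hS hc. apply hS, hx; assumption.
Qed.

Lemma commutator_mem k h : K k -> H h -> C (commutator mul inv k h).
Proof. intros hk hh S _ hc. apply hc; assumption. Qed.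

Hypotheses (HK : is_normal mul inv one K) (HH : is_normal mul inv one H).

(* [K,H] is normal: the conjugates of its elements lie in the subgroup
   generated by the conjugated commutators, which are commutators again. *)
Lemma comm_subgroup_normal : is_normal mul inv one C.
Proof.
  split; [exact comm_subgroup_subgroup |].
  destruct comm_subgroup_subgroup as (C1 & CM & CV).
  intros g x hx. revert g.
  apply (hx (fun x => forall g, C (mul (mul (inv g) x) g))).
  - split; [| split].
    + intro g. apply (transport one); [exact C1 | group_eq].
    + intros a b ha hb g. from (CM _ _ (ha g) (hb g)).
    + intros a ha g. from (CV _ (ha g)).
  - intros k h hk hh g.
    from (commutator_mem _ _ (proj2 HK g k hk) (proj2 HH g h hh)).
Qed.

Lemma conj_mod_comm k h : K k -> H h -> alpha mul inv C (conjg h k) k.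
Proof.
  intros hk hh. unfold alpha.
  from (normalV _ comm_subgroup_normal _
          (commutator_mem _ _ (normalV _ HK _ hk) (normalV _ HH _ hh))).
Qed.

Lemma conj_congr_mod_comm k g g' : K k -> alpha mul inv H g g' ->
  alpha mul inv C (conjg g k) (conjg g' k).
Proof.
  intros hk hg.
  from2 (conj_mod_comm _ _ (normal_conj _ HK g' _ hk) hg).
Qed.

End CommutatorSubgroup.

(* The product rule in coordinates: G(alpha_K) is K ><| G for conjugation. *)
Lemma diff_pmul p q : diff (pmul mul p q) = mul (diff p) (conjg (snd p) (diff q)).
Proof. group_eq. Qed.

Lemma diff_pinv p : diff (pinv inv p) = conjg (inv (snd p)) (inv (diff p)).
Proof. group_eq. Qed.

Section Coordinates.
Variable K : T -> Prop.
Hypothesis HK : is_normal mul inv one K.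

Lemma Galpha_pmul p q : K (diff p) -> K (diff q) -> K (diff (pmul mul p q)).
Proof.
  intros hp hq. rewrite diff_pmul.
  exact (normalM _ HK _ _ hp (normal_conj _ HK _ _ hq)).
Qed.

Lemma Galpha_pone : K (diff (pone one)).
Proof. unfold diff, pone; cbn [fst snd]. rewrite mulgV. exact (normal1 _ HK). Qed.

Lemma Galpha_pinv p : K (diff p) -> K (diff (pinv inv p)).
Proof.
  intro hp. rewrite diff_pinv.
  exact (normal_conj _ HK _ _ (normalV _ HK _ hp)).
Qed.

Lemma congruence_refl_K R : is_congruence_Galpha mul inv (alpha mul inv K) R ->
  forall k, K k -> R (k, one) (k, one).
Proof.
  intros (_ & Rrefl & _) k hk. apply Rrefl.
  unfold alpha; cbn [fst snd]. rewrite invg1, mulg1. exact hk.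
Qed.

End Coordinates.

Section DeltaCongruence.
Variables K H : T -> Prop.
Hypotheses (HK : is_normal mul inv one K) (HH : is_normal mul inv one H).
Local Notation C := (comm_subgroup mul inv one K H).
Let CN : is_normal mul inv one C := comm_subgroup_normal K H HK HH.

(* The explicit form of Delta_{alpha_K alpha_H}. *)
Definition delta_rel (p q : T * T) : Prop :=
  K (diff p) /\ K (diff q) /\ alpha mul inv C (diff p) (diff q) /\
  alpha mul inv H (snd p) (snd q).

(* Compatibility with products: by the product rule it reduces to
   y_p (d q) y_p^-1 = y_p' (d q') y_p'^-1 mod [K,H], which holds since
   y_p = y_p' mod H and d q = d q' mod [K,H]. *)
Lemma delta_rel_pmul p p' q q' : delta_rel p p' -> delta_rel q q' ->
  delta_rel (pmul mul p q) (pmul mul p' q').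
Proof.
  intros (hp & hp' & cp & sp) (hq & hq' & cq & sq).
  split; [exact (Galpha_pmul _ HK _ _ hp hq) |].
  split; [exact (Galpha_pmul _ HK _ _ hp' hq') |].
  split; [| exact (alpha_mul _ HH _ _ _ _ sp sq)].
  rewrite !diff_pmul. apply (alpha_mul _ CN _ _ _ _ cp).
  apply (alpha_trans _ CN _ (conjg (snd p') (diff q))).
  - exact (conj_congr_mod_comm _ _ HK HH _ _ _ hq sp).
  - exact (alpha_conj _ CN _ _ _ cq).
Qed.

Lemma delta_rel_pinv p p' : delta_rel p p' -> delta_rel (pinv inv p) (pinv inv p').
Proof.
  intros (hp & hp' & cp & sp).
  split; [exact (Galpha_pinv _ HK _ hp) |].
  split; [exact (Galpha_pinv _ HK _ hp') |].
  split; [| exact (alpha_inv _ HH _ _ sp)].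
  rewrite !diff_pinv.
  apply (alpha_trans _ CN _ (conjg (inv (snd p')) (inv (diff p)))).
  - exact (conj_congr_mod_comm _ _ HK HH _ _ _ (normalV _ HK _ hp) (alpha_inv _ HH _ _ sp)).
  - exact (alpha_conj _ CN _ _ _ (alpha_inv _ CN _ _ cp)).
Qed.

Lemma delta_rel_congruence :
  is_congruence_Galpha mul inv (alpha mul inv K) delta_rel.
Proof.
  split; [| split; [| split; [| split; [| split]]]].
  - intros p q (hp & hq & _). split; assumption.
  - intros p hp.
    exact (conj hp (conj hp (conj (alpha_refl _ CN _) (alpha_refl _ HH _)))).
  - intros p q (hp & hq & c & s).
    exact (conj hq (conj hp (conj (alpha_sym _ CN _ _ c) (alpha_sym _ HH _ _ s)))).
  - intros p q r (hp & _ & c & s) (_ & hr & c' & s').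
    exact (conj hp (conj hr (conj (alpha_trans _ CN _ _ _ c c')
                                   (alpha_trans _ HH _ _ _ s s')))).
  - exact delta_rel_pmul.
  - exact delta_rel_pinv.
Qed.

Lemma delta_rel_generators u v : alpha mul inv H u v -> delta_rel (u, u) (v, v).
Proof.
  intro huv. unfold delta_rel, diff; cbn [fst snd]. rewrite !mulgV.
  exact (conj (normal1 _ HK) (conj (normal1 _ HK) (conj (alpha_refl _ CN _) huv))).
Qed.

(* Any congruence of G(alpha_K) containing the generators of Delta
   identifies (c,1) with (1,1) for every c in [K,H]: these elements form a
   subgroup containing the commutators [k,h], as
   (k^-1,1)(h^-1,h^-1)(k,1)(h,h) ~ (k^-1,1)(1,1)(k,1)(1,1). *)
Lemma congruence_collapses_comm R :
  is_congruence_Galpha mul inv (alpha mul inv K) R ->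
  (forall u v, alpha mul inv H u v -> R (u, u) (v, v)) ->
  forall c, C c -> R (c, one) (one, one).
Proof.
  intros HR Hgen c hc.
  assert (Rk := congruence_refl_K _ R HR).
  assert (Rh : forall h, H h -> R (h, h) (one, one)).
  { intros h hh. apply Hgen. unfold alpha. rewrite invg1, mulg1. exact hh. }
  destruct HR as (_ & _ & _ & _ & Rmul & Rinv).
  apply hc; [split; [| split] |].
  - apply (transport2 _ _ _ _ (Rk one (normal1 _ HK))); reflexivity.
  - intros a b ha hb. from2 (Rmul _ _ _ _ ha hb).
  - intros a ha. from2 (Rinv _ _ ha).
  - intros k h hk hh.
    from2 (Rmul _ _ _ _ (Rmul _ _ _ _ (Rmul _ _ _ _ (Rk _ (normalV _ HK _ hk))
             (Rh _ (normalV _ HH _ hh))) (Rk _ hk)) (Rh _ hh)).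
Qed.

(* Hence delta_rel is contained in every such congruence: for p = (x,y)
   and q = (x',y'),
   p = (d p (d q)^-1, 1)(d q, 1)(y, y) ~ (1,1)(d q, 1)(y', y') = q. *)
Lemma delta_rel_least R :
  is_congruence_Galpha mul inv (alpha mul inv K) R ->
  (forall u v, alpha mul inv H u v -> R (u, u) (v, v)) ->
  forall p q, delta_rel p q -> R p q.
Proof.
  intros HR Hgen [x y] [x' y'] (_ & hq & cpq & spq).
  assert (hc := congruence_collapses_comm R HR Hgen _ cpq).
  assert (hdq := congruence_refl_K _ R HR _ hq).
  destruct HR as (_ & _ & _ & _ & Rmul & _).
  from2 (Rmul _ _ _ _ (Rmul _ _ _ _ hc hdq) (Hgen _ _ spq)).
Qed.

Theorem Delta_iff p q :
  Delta mul inv (alpha mul inv K) (alpha mul inv H) p q <-> delta_rel p q.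
Proof.
  split.
  - intro hD. exact (hD _ delta_rel_congruence delta_rel_generators).
  - intros hpq R HR Hgen. exact (delta_rel_least R HR Hgen p q hpq).
Qed.

End DeltaCongruence.

Lemma conj_qgroup_iso (D N : T -> Prop) g :
  is_normal mul inv one D -> is_normal mul inv one N ->
  is_iso (qgroup mul inv one D N) (qgroup mul inv one D N) (conjg g).
Proof.
  intros HD HN. assert (HNs : is_subgroup mul inv one N) by apply HN.
  split; [split; [| split; [| split; [| split]]] | split].
  - intros a ha. exact (normal_conj _ HD _ _ ha).
  - intros a b ha hb (_ & _ & hab).
    exact (conj (normal_conj _ HD _ _ ha)
             (conj (normal_conj _ HD _ _ hb) (alpha_conj _ HN _ _ _ hab))).
  - intros a b ha hb. apply qgroup_eq_of_eq; [exact HNs | | group_eq].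
    exact (normal_conj _ HD _ _ (normalM _ HD _ _ ha hb)).
  - intros a ha. apply qgroup_eq_of_eq; [exact HNs | | group_eq].
    exact (normal_conj _ HD _ _ (normalV _ HD _ ha)).
  - apply qgroup_eq_of_eq; [exact HNs | | group_eq].
    exact (normal_conj _ HD _ _ (normal1 _ HD)).
  - intros a b ha hb (_ & _ & hab).
    split; [exact ha | split; [exact hb |]].
    change (alpha mul inv N a b). from2 (alpha_conj _ HN (inv g) _ _ hab).
  - intros b hb. exists (conjg (inv g) b).
    split; [exact (normal_conj _ HD _ _ hb) |].
    apply qgroup_eq_of_eq; [exact HNs | | group_eq].
    exact (normal_conj _ HD _ _ (normal_conj _ HD _ _ hb)).
Qed.

Section Isomorphisms.
Variable K : T -> Prop.
Hypothesis HK : is_normal mul inv one K.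

Lemma total_normal : is_normal mul inv one (fun _ : T => True).
Proof. split; [split; [| split] |]; trivial. Qed.

Lemma conj_action H : is_normal mul inv one H ->
  is_aut_action (qgroup mul inv one (fun _ => True) H)
                (qgroup mul inv one K (comm_subgroup mul inv one K H)) conjg.
Proof.
  intro HH. assert (CN := comm_subgroup_normal K H HK HH).
  assert (CS : is_subgroup mul inv one (comm_subgroup mul inv one K H)) by apply CN.
  split; [| split; [| split]].
  - intros g _. exact (conj_qgroup_iso _ _ g HK CN).
  - intros g g' _ _ (_ & _ & hgg') k hk.
    exact (conj (normal_conj _ HK _ _ hk) (conj (normal_conj _ HK _ _ hk)
             (conj_congr_mod_comm _ _ HK HH _ _ _ hk hgg'))).
  - intros g g' k _ _ hk. apply qgroup_eq_of_eq; [exact CS | | group_eq].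
    exact (normal_conj _ HK _ _ hk).
  - intros k hk. apply qgroup_eq_of_eq; [exact CS | | group_eq].
    exact (normal_conj _ HK _ _ hk).
Qed.

Lemma Galpha_sdprod_iso H : is_normal mul inv one H ->
  is_iso (Galpha_quot mul inv one (alpha mul inv K)
            (Delta mul inv (alpha mul inv K) (alpha mul inv H)))
         (sdprod (qgroup mul inv one K (comm_subgroup mul inv one K H))
                 (qgroup mul inv one (fun _ => True) H) conjg)
         (fun p => (diff p, snd p)).
Proof.
  intro HH.
  assert (CS : is_subgroup mul inv one (comm_subgroup mul inv one K H))
    by apply (comm_subgroup_normal K H HK HH).
  assert (HS : is_subgroup mul inv one H) by apply HH.
  split; [split; [| split; [| split; [| split]]] | split].
  - intros p hp. exact (conj hp I).
  - intros p q _ _ hD.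
    destruct (proj1 (Delta_iff K H HK HH p q) hD) as (hp & hq & c & s).
    exact (conj (conj hp (conj hq c)) (conj I (conj I s))).
  - intros p q hp hq. split.
    + apply qgroup_eq_of_eq; [exact CS | exact (Galpha_pmul _ HK _ _ hp hq) |].
      exact (diff_pmul p q).
    + apply qgroup_eq_of_eq; [exact HS | exact I | reflexivity].
  - intros p hp. split.
    + apply qgroup_eq_of_eq; [exact CS | exact (Galpha_pinv _ HK _ hp) |].
      exact (diff_pinv p).
    + apply qgroup_eq_of_eq; [exact HS | exact I | reflexivity].
  - split.
    + apply qgroup_eq_of_eq; [exact CS | | group_eq].
      exact (Galpha_pone _ HK).
    + apply qgroup_eq_of_eq; [exact HS | exact I | reflexivity].
  - intros p q hp hq [(_ & _ & c) (_ & _ & s)].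
    exact (proj2 (Delta_iff K H HK HH p q) (conj hp (conj hq (conj c s)))).
  - intros [a y] [ha _]. exists (mul a y, y).
    assert (hd : K (diff (mul a y, y))) by from ha.
    split; [exact hd | split].
    + apply qgroup_eq_of_eq; [exact CS | exact hd | group_eq].
    + apply qgroup_eq_of_eq; [exact HS | exact I | reflexivity].
Qed.

Local Notation CG := (comm_subgroup mul inv one K (fun _ => True)).

(* Part (2): modulo [K,G] conjugation is trivial on K, so d is a
   homomorphism G(alpha_K) -> K/[K,G]. *)
Lemma diff_pmul_mod_comm p q : K (diff q) ->
  alpha mul inv CG (diff (pmul mul p q)) (mul (diff p) (diff q)).
Proof.
  intro hq. rewrite diff_pmul.
  apply (alpha_mul _ (comm_subgroup_normal _ _ HK total_normal)).
  - exact (alpha_refl _ (comm_subgroup_normal _ _ HK total_normal) _).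
  - exact (conj_mod_comm _ _ HK total_normal _ _ hq I).
Qed.

Lemma diff_pinv_mod_comm p : K (diff p) ->
  alpha mul inv CG (diff (pinv inv p)) (inv (diff p)).
Proof.
  intro hp. rewrite diff_pinv.
  exact (conj_mod_comm _ _ HK total_normal _ _ (normalV _ HK _ hp) I).
Qed.

Lemma Galpha_comm_iso :
  is_iso (Galpha_quot mul inv one (alpha mul inv K)
            (Delta mul inv (alpha mul inv K) (@total_rel T)))
         (qgroup mul inv one K CG) diff.
Proof.
  assert (CS : is_subgroup mul inv one CG)
    by apply (comm_subgroup_normal _ _ HK total_normal).
  split; [split; [| split; [| split; [| split]]] | split].
  - intros p hp. exact hp.
  - intros p q _ _ hD.
    destruct (proj1 (Delta_iff K _ HK total_normal p q) hD) as (hp & hq & c & _).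
    exact (conj hp (conj hq c)).
  - intros p q hp hq.
    exact (conj (Galpha_pmul _ HK _ _ hp hq)
             (conj (normalM _ HK _ _ hp hq) (diff_pmul_mod_comm p q hq))).
  - intros p hp.
    exact (conj (Galpha_pinv _ HK _ hp)
             (conj (normalV _ HK _ hp) (diff_pinv_mod_comm p hp))).
  - apply qgroup_eq_of_eq; [exact CS | | group_eq].
    exact (Galpha_pone _ HK).
  - intros p q hp hq (_ & _ & c).
    exact (proj2 (Delta_iff K _ HK total_normal p q) (conj hp (conj hq (conj c I)))).
  - intros b hb. exists (b, one).
    assert (hd : K (diff (b, one))) by from hb.
    split; [exact hd |].
    apply qgroup_eq_of_eq; [exact CS | exact hd | group_eq].
Qed.

End Isomorphisms.

End Groups.

Theorem lemma2p9 (T : Type) (mul : T -> T -> T) (inv : T -> T) (one : T)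
  (HG : is_group mul inv one) (K H : T -> Prop)
  (HK : is_normal mul inv one K) (HH : is_normal mul inv one H)
  (KH : forall x, K x -> H x) :
  (exists phi : T -> T -> T,
     is_aut_action (qgroup mul inv one (fun _ => True) H)
                   (qgroup mul inv one K (comm_subgroup mul inv one K H)) phi /\
     isomorphic
       (Galpha_quot mul inv one (alpha mul inv K)
          (Delta mul inv (alpha mul inv K) (alpha mul inv H)))
       (sdprod (qgroup mul inv one K (comm_subgroup mul inv one K H))
               (qgroup mul inv one (fun _ => True) H) phi)) /\
  isomorphic
    (Galpha_quot mul inv one (alpha mul inv K)
       (Delta mul inv (alpha mul inv K) (@total_rel T)))
    (qgroup mul inv one K (comm_subgroup mul inv one K (fun _ => True))).
Proof.
  split.
  - exists (conjg T mul inv). split.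
    + exact (conj_action T mul inv one HG K HK H HH).
    + exists (fun p => (diff T mul inv p, snd p)).
      exact (Galpha_sdprod_iso T mul inv one HG K HK H HH).
  - exists (diff T mul inv). exact (Galpha_comm_iso T mul inv one HG K HK).
Qed.
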